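(* Let $k \in \mathbb{R}$ and let $M$ be a real symmetric matrix whose diagonal entries are all equal to $k$ and whose off-diagonal entries are integers. Suppose that the multiplicity of $0$ as an eigenvalue of $M$ is greater than the maximum multiplicity of the non-zero eigenvalues of $M$. Then $k$ is an integer. *)

From HB Require Import structures.
From mathcomp Require Import all_boot all_order all_algebra.
From mathcomp Require Import reals.
Set Implicit Arguments. Unset Strict Implicit. Unset Printing Implicit Defensive.
Import Order.TTheory GRing.Theory Num.Theory.
Local Open Scope ring_scope.

Definition eig_mult (R : realType) (n : nat) (M : 'M[R]_n) (a : R) : nat :=
  mup a (char_poly M).

From HB Require Import structures.
From mathcomp Require Import all_boot all_order all_algebra.
From mathcomp Require Import reals complex algC algnum ring.
Set Implicit Arguments. Unset Strict Implicit. Unset Printing Implicit Defensive.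
Import Order.TTheory GRing.Theory Num.Theory.
Local Open Scope ring_scope.

(* A := M - k I is a real symmetric matrix with integer entries, so its
   characteristic polynomial q has integer coefficients and splits over R, and
   by hypothesis -k is the unique root of q of maximal multiplicity m. The roots
   of gcd(q, q', ..., q^(m-1)) are exactly the roots of q of multiplicity at
   least m, so this gcd, which can be computed over Q, is c (X + k)^j; comparing
   its two leading coefficients shows that k is rational. Being a root of the
   monic integer polynomial q, -k is then an integer. *)

Section RootMultiplicity.

Variable K : numFieldType.
Implicit Types (p q : {poly K}) (y : K).

Lemma derivn_mul_XsubC_exp q y m j : ~~ root q y -> (j <= m)%N ->
  exists2 r : {poly K}, ~~ root r y &
    (q * ('X - y%:P) ^+ m)^`(j) = r * ('X - y%:P) ^+ (m - j).
Proof.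
move=> qy; elim: j => [|j IHj] le_jm; first by exists q; rewrite ?derivn0 ?subn0.
have [r ry Dr] := IHj (ltnW le_jm).
rewrite derivnS Dr -(subnSK le_jm); set e := (m - j.+1)%N.
exists (r^`() * ('X - y%:P) + r *+ e.+1).
  by rewrite /root !hornerE subrr mulr0 add0r hornerMn mulrn_eq0 negb_or.
rewrite derivM deriv_exp derivXsubC mul1r /= exprS.
rewrite mulrnAr -mulrnAl; ring.
Qed.

Lemma root_gcdp_derivn p m y : p != 0 ->
  root (\big[@gcdp K/0]_(j < m) p^`(j)) y = (m <= mup y p)%N.
Proof.
move=> p0; have [mu [q]] := multiplicity_XsubC p y; rewrite p0 /= => qy Dp.
have -> : mup y p = mu by rewrite Dp mupMr // mup_XsubCX eqxx.
rewrite (big_morph (root^~ y) (fun a b => root_gcd a b y) (root0 y)) big_andE.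
apply/forallP/idP => [rootD | le_m j].
  rewrite leqNgt; apply/negP => lt_mu_m.
  have [r ry] := derivn_mul_XsubC_exp qy (leqnn mu).
  have := rootD (Ordinal lt_mu_m); rewrite /= Dp => /[swap] ->.
  by rewrite subnn mulr1 (negPf ry).
have lt_j_mu : (j < mu)%N := leq_trans (ltn_ord j) le_m.
have [r _ Dr] := derivn_mul_XsubC_exp qy (ltnW lt_j_mu).
by rewrite implyTb Dp Dr rootM -(subnSK lt_j_mu) root_exp_XsubC eqxx orbT.
Qed.

End RootMultiplicity.

Section SplitPolynomials.

Variables (F : fieldType) (K : numFieldType) (f : {rmorphism F -> K}).

Lemma single_root_in_image (p : {poly F}) (s : seq K) r :
    map_poly f p %| \prod_(t <- s) ('X - t%:P) -> root (map_poly f p) r ->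
    (forall y, root (map_poly f p) y -> y = r) ->
  exists x, r = f x.
Proof.
move=> p_dvd pr only_r; have [b Eb] := dvdp_prod_XsubC p_dvd.
set u := mask b s in Eb.
have r_u : r \in u by rewrite -root_prod_XsubC -(eqp_root Eb).
have Eu : u = nseq (size u) r.
  apply/all_pred1P/allP => t t_u; apply/eqP/only_r.
  by rewrite (eqp_root Eb) root_prod_XsubC.
have {}Eb := eqpfP Eb; rewrite lead_coef_prod_XsubC divr1 Eu in Eb.
set j := size u in Eb r_u.
have j_gt0 : (0 < j)%N by rewrite lt0n size_eq0; apply: contraTneq r_u => ->.
have coef_prod : (\prod_(t <- nseq j r) ('X - t%:P))`_j.-1 = - (r *+ j).
  have := @coefPn_prod_XsubC _ (nseq j r); rewrite size_nseq -lt0n => ->//.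
  by rewrite big_nseq iter_addr_0.
have := congr1 (fun q : {poly K} => q`_j.-1) Eb.
rewrite /= coefZ coef_prod coef_map lead_coef_map /= => Epj.
exists (- p`_j.-1 / (lead_coef p *+ j)).
have lp0 : f (lead_coef p) != 0.
  rewrite -lead_coef_map lead_coef_eq0; apply: contraTneq p_dvd => ->.
  by rewrite dvd0p monic_neq0 // monic_prod_XsubC.
have lpj0 : f (lead_coef p) *+ j != 0 by rewrite mulrn_eq0 negb_or -lt0n j_gt0.
rewrite fmorph_div rmorphN rmorphMn Epj mulrN opprK mulrnAr -mulrnAl.
by rewrite mulrAC divff // mul1r.
Qed.

Lemma max_mult_root_in_image (q : {poly F}) (s : seq K) r :
    map_poly f q = \prod_(t <- s) ('X - t%:P) ->
    (forall t, t != r -> (count_mem t s < count_mem r s)%N) ->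
  exists x, r = f x.
Proof.
move=> Eq r_max; set m := count_mem r s.
have [m' Em] : exists m', m = m'.+1.
  have r1 : r + 1 != r by rewrite -subr_eq0 addrC addKr oner_eq0.
  by exists m.-1; rewrite prednK // (leq_ltn_trans _ (r_max _ r1)).
have q0 : map_poly f q != 0 by rewrite Eq monic_neq0 // monic_prod_XsubC.
pose G := \big[@gcdp F/0]_(j < m) q^`(j).
have EG : map_poly f G = \big[@gcdp K/0]_(j < m) (map_poly f q)^`(j).
  rewrite (big_morph _ (gcdp_map f) (rmorph0 _)).
  by apply: eq_bigr => j _; rewrite derivn_map.
have rootG y : root (map_poly f G) y = (y == r).
  rewrite EG root_gcdp_derivn // Eq mu_prod_XsubC.
  by have [->|/r_max lt_yr] := eqVneq y r; rewrite ?leqnn // leqNgt lt_yr.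
apply: (@single_root_in_image G s r); last 2 first.
- by rewrite rootG.
- by move=> y; rewrite rootG => /eqP.
by rewrite -Eq EG Em big_ord_recl derivn0 dvdp_gcdl.
Qed.

End SplitPolynomials.

Lemma rat_root_monic_int (p : {poly int}) (x : rat) : p \is monic ->
  root (map_poly intr p) x -> x \is a Num.int.
Proof.
move=> p_monic px; set pC := map_poly intr p : {poly algC}.
have pCx : root pC (ratr x).
  have -> : pC = map_poly ratr (map_poly intr p : {poly rat}).
    by rewrite -map_poly_comp; apply: eq_map_poly => z /=; rewrite ratr_int.
  by rewrite fmorph_root.
have /(Cint_rat_Aint (Crat_rat x)) : ratr x \in Aint.
  apply: (root_monic_Aint pCx); first exact: monic_map.
  by apply/polyOverP => i; rewrite /pC coef_map /= rpred_int.
by move/floorK; rewrite -ratr_int => /fmorph_inj <-; apply: rpred_int.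
Qed.

Lemma mu_prod_XsubC_addr (F : fieldType) (s : seq F) (a k : F) :
  mup a (\prod_(t <- s) ('X - (t + k)%:P)) = count_mem (a - k) s.
Proof.
rewrite -(big_map (+%R^~ k) xpredT (fun t => 'X - t%:P)) mu_prod_XsubC count_map.
by apply: eq_count => t /=; rewrite [RHS]eq_sym subr_eq eq_sym.
Qed.

Lemma floor_mxK (R : archiNumDomainType) m n (A : 'M[R]_(m, n)) :
  (forall i j, A i j \is a Num.int) -> map_mx intr (map_mx Num.floor A) = A.
Proof. by move=> A_int; apply/matrixP => i j; rewrite !mxE floorK. Qed.

Lemma char_poly_conjmx (R : comUnitRingType) n (P A : 'M[R]_n) : P \in unitmx ->
  char_poly (invmx P *m A *m P) = char_poly A.
Proof.
move=> P_unit; rewrite /char_poly /char_poly_mx.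
have -> : 'X%:M - map_mx polyC (invmx P *m A *m P) =
    map_mx polyC (invmx P) *m ('X%:M - map_mx polyC A) *m map_mx polyC P.
  rewrite mulmxBr mulmxBl mul_mx_scalar -scalemxAl -map_mxM mulVmx //.
  by rewrite map_mx1 scalemx1 !map_mxM.
rewrite !det_mulmx mulrC mulrA -det_mulmx -map_mxM mulmxV //.
by rewrite map_mx1 det1 mul1r.
Qed.

Lemma char_poly_add_scalar (R : comNzRingType) n (A : 'M[R]_n) (k : R) (s : seq R) :
    char_poly A = \prod_(t <- s) ('X - t%:P) ->
  char_poly (A + k%:M) = \prod_(t <- s) ('X - (t + k)%:P).
Proof.
move=> EA; have -> : char_poly (A + k%:M) = char_poly A \Po ('X - k%:P).
  rewrite /char_poly -det_map_mx; congr (\det _); apply/matrixP => i j.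
  rewrite !mxE; case: eqP => _ /=.
    by rewrite !mulr1n comp_polyB comp_polyX comp_polyC polyCD; ring.
  by rewrite !mulr0n !addr0 !sub0r rmorphN /= comp_polyC.
rewrite EA rmorph_prod; apply: eq_bigr => t _ /=.
by rewrite comp_polyB comp_polyX comp_polyC polyCD; ring.
Qed.

Lemma realsym_char_poly_split (R : rcfType) n (A : 'M[R]_n) : A^T = A ->
  exists s : seq R, char_poly A = \prod_(t <- s) ('X - t%:P).
Proof.
move=> A_sym; pose Ac := map_mx (real_complex R) A.
have Ac_herm : Ac \is hermsymmx.
  apply: realsym_hermsym.
    apply/is_hermitianmxP; rewrite expr0 scale1r.
    by apply/matrixP => i j; rewrite !mxE -[in LHS]A_sym mxE.
  by apply/'forall_forallP => i j; rewrite mxE; apply/complex_realP; exists (A i j).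
have /orthomx_spectralP EAc := hermitian_normalmx Ac_herm.
have /mxOverP diag_real := hermitian_spectral_diag_real Ac_herm.
exists [seq complex.Re (spectral_diag Ac 0 i) | i <- enum 'I_n].
apply: (@map_poly_inj _ _ (real_complex R)).
rewrite map_char_poly -/Ac EAc char_poly_conjmx ?spectral_unit //.
rewrite char_poly_trig ?diag_mx_is_trig // rmorph_prod big_map big_enum /=.
apply: eq_bigr => i _; rewrite map_polyXsubC mxE eqxx mulr1n.
by rewrite -EAc; congr (_ - _%:P); exact: (esym (RRe_real (diag_real 0 i))).
Qed.

Theorem lemma2p4 (R : realType) (n : nat) (M : 'M[R]_n) (k : R)
  (Hsym : M^T = M)
  (Hdiag : forall i : 'I_n, M i i = k)
  (Hoff : forall i j : 'I_n, i != j -> M i j \is a Num.int)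
  (Hmult : forall a : R, a != 0 -> (eig_mult M a < eig_mult M 0)%N) :
  k \is a Num.int.
Proof.
pose A := M - k%:M.
have [s EA] : exists s, char_poly A = \prod_(t <- s) ('X - t%:P).
  by apply: realsym_char_poly_split; rewrite raddfB /= tr_scalar_mx Hsym.
have multE a : eig_mult M a = count_mem (a - k) s.
  by rewrite /eig_mult -[M](subrK k%:M) (char_poly_add_scalar k EA) mu_prod_XsubC_addr.
have A_int i j : A i j \is a Num.int.
  rewrite !mxE; have [<-|/Hoff Mij] := eqVneq i j; first by rewrite Hdiag subrr.
  by rewrite mulr0n subr0.
pose Az := map_mx Num.floor A; pose AQ : 'M[rat]_n := map_mx intr Az.
have EAQ : map_poly ratr (char_poly AQ) = char_poly A.
  rewrite map_char_poly -[in RHS](floor_mxK A_int); congr char_poly.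
  by apply/matrixP => i j; rewrite !mxE; exact: ratr_int.
have [x Ex] : exists x : rat, - k = ratr x.
  apply: (max_mult_root_in_image (q := char_poly AQ) (s := s)); first by rewrite EAQ.
  move=> t t_k; have := Hmult (t + k); rewrite !multE addrK sub0r; apply.
  by rewrite addr_eq0.
have k_root : root (char_poly A) (- k).
  rewrite EA root_prod_XsubC -has_pred1 has_count -(sub0r k) -multE.
  exact: leq_ltn_trans (Hmult 1 (oner_neq0 _)).
have /(rat_root_monic_int (char_poly_monic Az)) x_int :
    root (map_poly intr (char_poly Az)) x.
  by move: k_root; rewrite -EAQ Ex fmorph_root map_char_poly.
by rewrite -[k]opprK Ex rpredN -(floorK x_int) ratr_int rpred_int.
Qed.
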